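(* Let $(X,d)$ be a metric space, $x_0\in X$, $n\geq 1$, and let $e$ be the identity of $\pi_n(X,x_0)$. For all $a,b\in\pi_n(X,x_0)$, $\rho(ab,e)\leq\max\{\rho(a,e),\rho(b,e)\}$.
   Context: $\Omega^n(X,x_0)$ is the set of continuous maps $\alpha:[0,1]^n\to X$ with $\alpha(\partial[0,1]^n)=\{x_0\}$, with uniform metric $\mu(\alpha,\beta)=\sup_{t\in[0,1]^n}d(\alpha(t),\beta(t))$. For $a,b\in\pi_n(X,x_0)$, $\rho(a,b)=\inf\{\mu(\alpha,\beta)\mid\alpha\in a,\beta\in b\}$. *)

From HB Require Import structures.
From mathcomp Require Import all_boot all_order all_algebra.
From mathcomp Require Import all_classical all_reals ereal.
Set Implicit Arguments. Unset Strict Implicit. Unset Printing Implicit Defensive.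
Import Order.TTheory GRing.Theory Num.Theory.
Local Open Scope classical_set_scope.
Local Open Scope ring_scope.

Section HomotopyDefs.
Variables (R : realType) (X : Type) (d : X -> X -> R).

Definition is_metric : Prop :=
  (forall x y, 0 <= d x y) /\ (forall x y, d x y = 0 <-> x = y) /\
  (forall x y, d x y = d y x) /\ (forall x y z, d x z <= d x y + d y z).

Variable n : nat.
Definition pt := 'I_n -> R.

Definition cube : set pt := [set t | forall i, 0 <= t i <= 1].
Definition bdry : set pt :=
  [set t | cube t /\ exists i, t i = 0 \/ t i = 1].

Definition supdist (s t : pt) : R := \big[Num.max/0]_i `|s i - t i|.
Definition pdist (p q : R * pt) : R := Num.max `|p.1 - q.1| (supdist p.2 q.2).

Definition cont_on (T : Type) (dT : T -> T -> R) (A : set T) (f : T -> X) :=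
  forall t, A t -> forall e, 0 < e -> exists2 del, 0 < del &
    forall u, A u -> dT t u < del -> d (f t) (f u) < e.

(* Omega^n(X,x0) : maps only matter on the cube *)
Definition Omega (x0 : X) (al : pt -> X) : Prop :=
  cont_on supdist cube al /\ (forall t, bdry t -> al t = x0).

Definition homotopic (x0 : X) (al be : pt -> X) : Prop :=
  exists H : R -> pt -> X,
    cont_on pdist [set p | 0 <= p.1 <= 1 /\ cube p.2] (fun p => H p.1 p.2) /\
    (forall t, cube t -> H 0 t = al t /\ H 1 t = be t) /\
    (forall s t, 0 <= s <= 1 -> bdry t -> H s t = x0).

Definition hclass (x0 : X) (al : pt -> X) : set (pt -> X) :=
  [set be | Omega x0 be /\ homotopic x0 al be].

Definition hgrp (x0 : X) : set (set (pt -> X)) :=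
  [set A | exists2 al, Omega x0 al & A = hclass x0 al].

Definition hgrp_e (x0 : X) : set (pt -> X) := hclass x0 (fun _ => x0).

Definition setc (t : pt) (i0 : 'I_n) (r : R) : pt :=
  fun i => if i == i0 then r else t i.
Definition concat (i0 : 'I_n) (al be : pt -> X) : pt -> X :=
  fun t => if t i0 <= 2^-1 then al (setc t i0 (2 * t i0))
           else be (setc t i0 (2 * t i0 - 1)).

Definition hgrp_mul (x0 : X) (i0 : 'I_n) (a b : set (pt -> X)) : set (pt -> X) :=
  [set ga | exists al be, a al /\ b be /\ Omega x0 ga /\
                          homotopic x0 (concat i0 al be) ga].

Definition mu_unif (al be : pt -> X) : \bar R :=
  ereal_sup [set (d (al t) (be t))%:E | t in cube].
Definition rho_pi (a b : set (pt -> X)) : \bar R :=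
  ereal_inf [set mu_unif al be | al in a & be in b].

End HomotopyDefs.

From HB Require Import structures.
From mathcomp Require Import all_boot all_order all_algebra.
From mathcomp Require Import all_classical all_reals ereal.
From mathcomp Require Import lra.
Import Order.TTheory GRing.Theory Num.Theory.
Local Open Scope classical_set_scope.
Local Open Scope ring_scope.
Set Implicit Arguments. Unset Strict Implicit. Unset Printing Implicit Defensive.

(* Take al in a, al' in b and null-homotopic be, be'.  Then al * al' lies in ab
   and be * be' is again null-homotopic (concatenate the two null-homotopies).
   Every value of the concatenations compares al with be or al' with be' at the
   same point of the cube, so mu(al * al', be * be') <= max(mu(al, be),
   mu(al', be')); taking infima over al, be, al', be' gives the inequality. *)

Lemma le_maxe_ereal_inf (R : realType) (S T : set (\bar R)) (L : \bar R) :
  (forall x y, S x -> T y -> (L <= maxe x y)%E) ->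
  (L <= maxe (ereal_inf S) (ereal_inf T))%E.
Proof.
move=> le_L; rewrite leNgt gt_max; apply/negP.
case/andP=> /ereal_inf_lt[x Sx xL] /ereal_inf_lt[y Ty yL].
by have := le_L x y Sx Ty; rewrite leNgt gt_max xL yL.
Qed.

Section Cube.
Variables (R : realType) (n : nat).
Implicit Types (s t : pt R n) (p q : R * pt R n).

Lemma supdist_ge0 s t : 0 <= supdist s t.
Proof. by apply: bigmax_ge_id. Qed.

Lemma le_supdist s t i : `|s i - t i| <= supdist s t.
Proof. exact: le_bigmax. Qed.

Lemma supdist_le s t c : 0 <= c -> (forall i, `|s i - t i| <= c) -> supdist s t <= c.
Proof. by move=> c_ge0 le_c; apply: bigmax_le. Qed.

Lemma le_pdist1 p q : `|p.1 - q.1| <= pdist p q.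
Proof. by rewrite le_max lexx. Qed.

Lemma le_pdist2 p q : supdist p.2 q.2 <= pdist p q.
Proof. by rewrite le_max lexx orbT. Qed.

Lemma pdist_ge0 p q : 0 <= pdist p q.
Proof. exact: le_trans (supdist_ge0 _ _) (le_pdist2 p q). Qed.

Definition cylinder : set (R * pt R n) := [set p | 0 <= p.1 <= 1 /\ cube p.2].

Variable i0 : 'I_n.

Lemma setc_id t r : setc t i0 r i0 = r.
Proof. by rewrite /setc eqxx. Qed.

Lemma setc_cube t r : cube t -> 0 <= r <= 1 -> cube (setc t i0 r).
Proof. by move=> ht hr i; rewrite /setc; case: ifP. Qed.

Lemma supdist_setc s t x y c : `|x - y| <= c -> supdist s t <= c ->
  supdist (setc s i0 x) (setc t i0 y) <= c.
Proof.
move=> le_xy le_st; apply: supdist_le => [|i].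
  exact: le_trans (supdist_ge0 s t) le_st.
by rewrite /setc; case: ifP => // _; apply: le_trans (le_supdist s t i) le_st.
Qed.

Lemma dist_min1 (x y : R) : `|Num.min x 1 - Num.min y 1| <= `|x - y|.
Proof.
have := ler_norm (x - y); have := ler_norm (y - x); rewrite distrC => *.
by rewrite ler_norml; case: (leP x 1); case: (leP y 1) => *; apply/andP; split; lra.
Qed.

Lemma dist_max0 (x y : R) : `|Num.max x 0 - Num.max y 0| <= `|x - y|.
Proof.
have := ler_norm (x - y); have := ler_norm (y - x); rewrite distrC => *.
by rewrite ler_norml; case: (leP x 0); case: (leP y 0) => *; apply/andP; split; lra.
Qed.

(* The halves [t i0 <= 1/2] and [t i0 >= 1/2] of the cube stretched along [i0]
   onto the whole cube; clamping extends them to Lipschitz self-maps of the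
   cube. *)
Definition lower_half t := setc t i0 (Num.min (2 * t i0) 1).
Definition upper_half t := setc t i0 (Num.max (2 * t i0 - 1) 0).

Lemma dist_double (x y : R) : `|2 * x - 2 * y| = 2 * `|x - y|.
Proof. by rewrite -mulrBr normrM ger0_norm. Qed.

Lemma supdist_lower_half s t :
  supdist (lower_half s) (lower_half t) <= 2 * supdist s t.
Proof.
have := le_supdist s t i0; have := supdist_ge0 s t.
have := dist_min1 (2 * s i0) (2 * t i0); rewrite dist_double => *.
by apply: supdist_setc; lra.
Qed.

Lemma supdist_upper_half s t :
  supdist (upper_half s) (upper_half t) <= 2 * supdist s t.
Proof.
have := le_supdist s t i0; have := supdist_ge0 s t.
have := dist_max0 (2 * s i0 - 1) (2 * t i0 - 1).
have -> : 2 * s i0 - 1 - (2 * t i0 - 1) = 2 * s i0 - 2 * t i0 by lra.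
rewrite dist_double => *.
by apply: supdist_setc; lra.
Qed.

Lemma setc_bdry t r : bdry t -> 0 <= r <= 1 ->
  (t i0 = 0 -> r = 0) -> (t i0 = 1 -> r = 1) -> bdry (setc t i0 r).
Proof.
move=> [ht [i ti]] r01 r0 r1; split; first exact: setc_cube.
exists i; case: (eqVneq i i0) => [eq_i | ne_i]; last by rewrite /setc (negbTE ne_i).
rewrite eq_i setc_id; rewrite eq_i in ti.
by case: ti => [/r0 | /r1] ->; [left | right].
Qed.

Lemma lower_half_cube t : cube t -> cube (lower_half t).
Proof.
move=> ht; have /andP[? ?] := ht i0; apply: setc_cube => //.
by case: (leP (2 * t i0) 1) => *; apply/andP; split; lra.
Qed.

Lemma upper_half_cube t : cube t -> cube (upper_half t).
Proof.
move=> ht; have /andP[? ?] := ht i0; apply: setc_cube => //.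
by case: (leP (2 * t i0 - 1) 0) => *; apply/andP; split; lra.
Qed.

Lemma lower_half_bdry t : bdry t -> bdry (lower_half t).
Proof.
move=> bt; have := lower_half_cube bt.1 i0; rewrite /lower_half setc_id => r01.
have /andP[? ?] := bt.1 i0.
by apply: setc_bdry => // ti; case: (leP (2 * t i0) 1) => *; lra.
Qed.

Lemma upper_half_bdry t : bdry t -> bdry (upper_half t).
Proof.
move=> bt; have := upper_half_cube bt.1 i0; rewrite /upper_half setc_id => r01.
have /andP[? ?] := bt.1 i0.
by apply: setc_bdry => // ti; case: (leP (2 * t i0 - 1) 0) => *; lra.
Qed.

Lemma lower_half_at1 t : 2^-1 <= t i0 -> lower_half t i0 = 1.
Proof. by move=> ?; rewrite /lower_half setc_id; apply/min_idPr; lra. Qed.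

Lemma upper_half_at0 t : t i0 <= 2^-1 -> upper_half t i0 = 0.
Proof. by move=> ?; rewrite /upper_half setc_id; apply/max_idPr; lra. Qed.

Lemma concatE (X : Type) (al be : pt R n -> X) t : cube t ->
  concat i0 al be t = if t i0 <= 2^-1 then al (lower_half t) else be (upper_half t).
Proof.
move=> ht; have /andP[? ?] := ht i0; rewrite /concat /lower_half /upper_half.
case: ifP => le_t; first by rewrite (min_idPl _) //; lra.
have gt_t : 2^-1 < t i0 by rewrite ltNge le_t.
by rewrite (max_idPl _) //; lra.
Qed.

Lemma pdist_cylinder_map (g : pt R n -> pt R n) (K : R) p q : 1 <= K ->
  (forall s t, supdist (g s) (g t) <= K * supdist s t) ->
  pdist (p.1, g p.2) (q.1, g q.2) <= K * pdist p q.
Proof.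
move=> K_ge1 g_lip; have := le_pdist1 p q; have := le_pdist2 p q.
have := g_lip p.2 q.2; have := pdist_ge0 p q => *.
by rewrite ge_max /=; apply/andP; split; nra.
Qed.

End Cube.

Section Continuity.
Variables (R : realType) (X : Type) (d : X -> X -> R).
Hypothesis hd : is_metric d.
Variables (T : Type) (dT : T -> T -> R) (D : set T).

Lemma eq_cont_on (f g : T -> X) :
  (forall p, D p -> f p = g p) -> cont_on d dT D f -> cont_on d dT D g.
Proof.
move=> eq_fg cont_f t Dt e e_gt0; have [del del_gt0 near_f] := cont_f t Dt e e_gt0.
by exists del => // u Du near_tu; rewrite -!eq_fg //; apply: near_f.
Qed.

Lemma cont_on_comp_lip (f : T -> X) (phi : T -> T) (K : R) : 0 < K ->
  cont_on d dT D f -> (forall p, D p -> D (phi p)) ->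
  (forall p q, dT (phi p) (phi q) <= K * dT p q) -> cont_on d dT D (f \o phi).
Proof.
move=> K_gt0 cont_f phiD phi_lip t Dt e e_gt0.
have [del del_gt0 near_f] := cont_f (phi t) (phiD t Dt) e e_gt0.
exists (del / K); first exact: divr_gt0.
move=> u Du near_tu; apply: near_f; first exact: phiD.
by apply: le_lt_trans (phi_lip t u) _; rewrite mulrC -ltr_pdivlMr.
Qed.

(* No closedness of the two pieces is needed: each map is constantly [x0] where
   the other one is used. *)
Lemma cont_on_paste (A B : T -> X) (c : T -> bool) (x0 : X) :
  cont_on d dT D A -> cont_on d dT D B ->
  (forall p, D p -> c p -> B p = x0) -> (forall p, D p -> ~~ c p -> A p = x0) ->
  cont_on d dT D (fun p => if c p then A p else B p).
Proof.
have [_ [_ [_ triangle]]] := hd.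
move=> cont_A cont_B B_x0 A_x0 t Dt e e_gt0.
have e2_gt0 : 0 < e / 2 by rewrite divr_gt0.
have [dA dA_gt0 near_A] := cont_A t Dt _ e2_gt0.
have [dB dB_gt0 near_B] := cont_B t Dt _ e2_gt0.
exists (Num.min dA dB); first by rewrite lt_min dA_gt0.
move=> u Du; rewrite lt_min => /andP[/(near_A u Du) At /(near_B u Du) Bt].
case ct: (c t); case cu: (c u); try lra.
- rewrite (A_x0 u Du (negbT cu)) in At; rewrite (B_x0 t Dt ct) in Bt.
  by apply: le_lt_trans (triangle _ x0 _) _; lra.
- rewrite (A_x0 t Dt (negbT ct)) in At; rewrite (B_x0 u Du cu) in Bt.
  by apply: le_lt_trans (triangle _ x0 _) _; lra.
Qed.

End Continuity.

Section Concatenation.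
Variables (R : realType) (n : nat) (X : Type) (d : X -> X -> R).
Hypothesis hd : is_metric d.
Variables (x0 : X) (i0 : 'I_n).
Implicit Types al be : pt R n -> X.

Lemma cont_on_cylinder (f : pt R n -> X) :
  cont_on d (@supdist R n) (@cube R n) f ->
  cont_on d (@pdist R n) (@cylinder R n) (fun p => f p.2).
Proof.
move=> cont_f p [_ cube_p] e e_gt0.
have [del del_gt0 near_f] := cont_f p.2 cube_p e e_gt0.
exists del => // q [_ cube_q] near_pq; apply: near_f => //.
exact: le_lt_trans (le_pdist2 p q) near_pq.
Qed.

Lemma cont_on_cylinder_cube (f : pt R n -> X) :
  cont_on d (@pdist R n) (@cylinder R n) (fun p => f p.2) ->
  cont_on d (@supdist R n) (@cube R n) f.
Proof.
have cyl0 t : cube t -> @cylinder R n (0, t) by split; rewrite //= lexx ler01.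
move=> cont_f t ht e e_gt0.
have [del del_gt0 near_f] := cont_f (0, t) (cyl0 t ht) e e_gt0.
exists del => // u hu near_tu; apply: (near_f (0, u) (cyl0 u hu)).
by rewrite /pdist /= subrr normr0 (max_idPr (supdist_ge0 t u)).
Qed.

Lemma eq_concat al be al' be' t :
  (forall u, cube u -> al u = al' u) -> (forall u, cube u -> be u = be' u) ->
  cube t -> concat i0 al be t = concat i0 al' be' t.
Proof.
move=> eq_al eq_be ht; rewrite !concatE //.
case: ifP => _; first by apply: eq_al; apply: lower_half_cube.
by apply: eq_be; apply: upper_half_cube.
Qed.

Lemma concat_bdry al be t :
  (forall u, bdry u -> al u = x0) -> (forall u, bdry u -> be u = x0) ->
  bdry t -> concat i0 al be t = x0.
Proof.
move=> al_x0 be_x0 bt; rewrite concatE; last exact: bt.1.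
case: ifP => _; first by apply: al_x0; apply: lower_half_bdry.
by apply: be_x0; apply: upper_half_bdry.
Qed.

Lemma concat_homotopy_cont (F G : R -> pt R n -> X) :
  cont_on d (@pdist R n) (@cylinder R n) (fun p => F p.1 p.2) ->
  cont_on d (@pdist R n) (@cylinder R n) (fun p => G p.1 p.2) ->
  (forall s t, 0 <= s <= 1 -> cube t -> t i0 = 1 -> F s t = x0) ->
  (forall s t, 0 <= s <= 1 -> cube t -> t i0 = 0 -> G s t = x0) ->
  cont_on d (@pdist R n) (@cylinder R n)
    (fun p => concat i0 (F p.1) (G p.1) p.2).
Proof.
move=> cont_F cont_G F_x0 G_x0.
pose lo (p : R * pt R n) := (p.1, lower_half i0 p.2).
pose hi (p : R * pt R n) := (p.1, upper_half i0 p.2).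
apply: (eq_cont_on (f := fun p => if p.2 i0 <= 2^-1
  then F (lo p).1 (lo p).2 else G (hi p).1 (hi p).2)).
  by move=> p [_ cube_p]; rewrite concatE.
apply: (cont_on_paste hd (x0 := x0)).
- apply: (cont_on_comp_lip (K := 2)) cont_F _ _ => // [p [? ?] | p q].
    by split => //; apply: lower_half_cube.
  by apply: pdist_cylinder_map; [rewrite ler1n | exact: supdist_lower_half].
- apply: (cont_on_comp_lip (K := 2)) cont_G _ _ => // [p [? ?] | p q].
    by split => //; apply: upper_half_cube.
  by apply: pdist_cylinder_map; [rewrite ler1n | exact: supdist_upper_half].
- move=> p [? cube_p] le_p; apply: G_x0 => //; first exact: upper_half_cube.
  exact: upper_half_at0.
- move=> p [? cube_p]; rewrite -ltNge => gt_p; apply: F_x0 => //.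
    exact: lower_half_cube.
  exact/lower_half_at1/ltW.
Qed.

Lemma Omega_concat al be :
  Omega d x0 al -> Omega d x0 be -> Omega d x0 (concat i0 al be).
Proof.
move=> [cont_al al_x0] [cont_be be_x0]; split; last by move=> t; apply: concat_bdry.
apply: cont_on_cylinder_cube.
apply: (concat_homotopy_cont (F := fun _ => al) (G := fun _ => be)).
- exact: cont_on_cylinder.
- exact: cont_on_cylinder.
- by move=> s t _ ht t1; apply: al_x0; split => //; exists i0; right.
- by move=> s t _ ht t0; apply: be_x0; split => //; exists i0; left.
Qed.

Lemma homotopic_refl al : Omega d x0 al -> homotopic d x0 al al.
Proof.
move=> [cont_al al_x0]; exists (fun _ => al); split; first exact: cont_on_cylinder.
by split => // s t _; apply: al_x0.
Qed.

Lemma hgrp_e_concat be be' :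
  hgrp_e d x0 be -> hgrp_e d x0 be' -> hgrp_e d x0 (concat i0 be be').
Proof.
move=> [Omega_be [H [cont_H [H01 H_x0]]]] [Omega_be' [H' [cont_H' [H'01 H'_x0]]]].
split; first exact: Omega_concat.
exists (fun s => concat i0 (H s) (H' s)); split.
  apply: concat_homotopy_cont => // s t s01 ht ti0.
    by apply: H_x0 => //; split => //; exists i0; right.
  by apply: H'_x0 => //; split => //; exists i0; left.
split=> [t ht | s t s01 bt]; last first.
  by apply: concat_bdry => // u bu; [apply: H_x0 | apply: H'_x0].
split; last by apply: eq_concat => // u; [case/H01 | case/H'01].
rewrite (eq_concat (al' := fun _ => x0) (be' := fun _ => x0)) //.
- by rewrite /concat; case: ifP.
- by move=> u /H01[].
- by move=> u /H'01[].
Qed.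

Lemma mu_unif_concat al be al' be' :
  (mu_unif d (concat i0 al al') (concat i0 be be') <=
   maxe (mu_unif d al be) (mu_unif d al' be'))%E.
Proof.
apply: ge_ereal_sup => _ [t ht <-]; rewrite !concatE //; case: ifP => _.
  rewrite le_max ereal_sup_ubound //.
  by exists (lower_half i0 t) => //; apply: lower_half_cube.
rewrite le_max orbC ereal_sup_ubound //.
by exists (upper_half i0 t) => //; apply: upper_half_cube.
Qed.

Lemma hgrp_mul_concat (a b : set (pt R n -> X)) al al' :
  a al -> b al' -> Omega d x0 al -> Omega d x0 al' ->
  hgrp_mul d x0 i0 a b (concat i0 al al').
Proof.
move=> a_al b_al' Omega_al Omega_al'.
have Omega_cat := Omega_concat Omega_al Omega_al'.
by exists al, al'; do 3!split => //; apply: homotopic_refl.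
Qed.

Lemma rho_pi_mul_e_le_max (a b : set (pt R n -> X)) :
  (forall al, a al -> Omega d x0 al) -> (forall al, b al -> Omega d x0 al) ->
  (rho_pi d (hgrp_mul d x0 i0 a b) (hgrp_e d x0) <=
   maxe (rho_pi d a (hgrp_e d x0)) (rho_pi d b (hgrp_e d x0)))%E.
Proof.
move=> Omega_a Omega_b.
apply: le_maxe_ereal_inf => _ _ [al a_al [be e_be <-]] [al' b_al' [be' e_be' <-]].
apply: le_trans (mu_unif_concat al be al' be'); apply: ereal_inf_lbound.
exists (concat i0 al al').
  exact: hgrp_mul_concat (Omega_a _ a_al) (Omega_b _ b_al').
by exists (concat i0 be be') => //; apply: hgrp_e_concat.
Qed.

End Concatenation.

Local Open Scope ereal_scope.

Theorem lemma4p4 (R : realType) (X : Type) (d : X -> X -> R)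
  (hd : is_metric d) (x0 : X) (n : nat) (hn : (0 < n)%N)
  (a b : set (('I_n -> R) -> X)) :
  hgrp d x0 a -> hgrp d x0 b ->
  rho_pi d (hgrp_mul d x0 (Ordinal hn) a b) (hgrp_e d (n:=n) x0) <=
    maxe (rho_pi d a (hgrp_e d (n:=n) x0)) (rho_pi d b (hgrp_e d (n:=n) x0)).
Proof.
move=> [al0 _ ->] [al0' _ ->].
by apply: rho_pi_mul_e_le_max => // al [].
Qed.
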